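(* Let $S$ be a state of a $d$-dimensional Hegselmann–Krause system with social network $G=(V,E)$ and confidence bound $\varepsilon>0$, and let $\lambda$ be the length of a longest edge of the influence network. Then $$\sum_{v\in V}|N_v|\,\|m_v\|_2\ \ge\ 2\lambda.$$
   Context: A $d$-dimensional Hegselmann–Krause system has a finite undirected graph $G=(V,E)$ (social network), a confidence bound $\varepsilon>0$, and a state given by positions $x_v\in\mathbb{R}^d$. In a state, $N_v=\{u:\{u,v\}\in E,\ \|x_u-x_v\|_2\le\varepsilon\}\cup\{v\}$ is the influencing neighborhood of $v$, $m_v=\frac{1}{|N_v|}\sum_{u\in N_v}(x_u-x_v)$ is its movement, the influence network is $(V,E_I)$ with $E_I=\{\{u,v\}\in E:\|x_u-x_v\|_2\le\varepsilon\}$, and the length of an edge $\{u,v\}$ is $\|x_u-x_v\|_2$. *)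

From HB Require Import structures.
From mathcomp Require Import all_boot all_order all_algebra.
Set Implicit Arguments. Unset Strict Implicit. Unset Printing Implicit Defensive.
Import Order.TTheory GRing.Theory Num.Theory.
Local Open Scope ring_scope.

(* The social network is a
   finite simple undirected graph given by a symmetric irreflexive relation
   [e] on a finite vertex type [V]. *)

Definition norm2 (R : rcfType) (d : nat) (y : 'rV[R]_d) : R :=
  Num.sqrt (\sum_(i < d) y 0 i ^+ 2).

Definition dist2 (R : rcfType) (d : nat) (y z : 'rV[R]_d) : R := norm2 (y - z).

Definition infl_edge (R : rcfType) (d : nat) (V : finType) (e : rel V)
  (eps : R) (x : V -> 'rV[R]_d) (u v : V) : bool :=
  e u v && (dist2 (x u) (x v) <= eps).

Definition nbhd (R : rcfType) (d : nat) (V : finType) (e : rel V)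
  (eps : R) (x : V -> 'rV[R]_d) (v : V) : {set V} :=
  [set u | infl_edge e eps x u v || (u == v)].

Definition movement (R : rcfType) (d : nat) (V : finType) (e : rel V)
  (eps : R) (x : V -> 'rV[R]_d) (v : V) : 'rV[R]_d :=
  (#|nbhd e eps x v|%:R)^-1 *: \sum_(u in nbhd e eps x v) (x u - x v).

(* length of a longest edge of the influence network (0 if it has no edge) *)
Definition longest_infl_edge (R : rcfType) (d : nat) (V : finType) (e : rel V)
  (eps : R) (x : V -> 'rV[R]_d) : R :=
  \big[Num.max/0]_(p : V * V | infl_edge e eps x p.1 p.2) dist2 (x p.1) (x p.2).

From HB Require Import structures.
From mathcomp Require Import all_boot all_order all_algebra.
From mathcomp Require Import ring lra.

Set Implicit Arguments.
Unset Strict Implicit.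
Unset Printing Implicit Defensive.
Import Order.TTheory GRing.Theory Num.Theory.
Local Open Scope ring_scope.

(* Let (a, b) be a longest influence edge, w := x_b - x_a and f v := <x_v, w>,
   so that |N_v| <m_v, w> = sum_(u in N_v) (f u - f v).  Summed over the
   sublevel set {f <= f a}, the terms of edges inside the set cancel, while
   those of edges leaving it are nonnegative and include f b - f a = lam^2;
   symmetrically the superlevel set {f >= f b} contributes at most -lam^2.
   Hence sum_v |N_v| |<m_v, w>| >= 2 lam^2, and Cauchy-Schwarz with
   |w| = lam gives the claim. *)

Section Euclidean.
Variables (R : rcfType) (d : nat).
Implicit Types y w : 'rV[R]_d.

Definition dotp y w : R := \sum_(i < d) y 0 i * w 0 i.

Lemma dotpp_ge0 y : 0 <= dotp y y.
Proof. by apply: sumr_ge0 => i _; rewrite -expr2 sqr_ge0. Qed.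

Lemma norm2_ge0 y : 0 <= norm2 y.
Proof. exact: sqrtr_ge0. Qed.

Lemma norm2E y : norm2 y = Num.sqrt (dotp y y).
Proof. by rewrite /norm2 /dotp; under eq_bigr do rewrite expr2. Qed.

Lemma sqr_norm2 y : norm2 y ^+ 2 = dotp y y.
Proof. by rewrite norm2E sqr_sqrtr ?dotpp_ge0. Qed.

Lemma norm2Z (c : R) y : norm2 (c *: y) = `|c| * norm2 y.
Proof.
rewrite !norm2E /dotp (eq_bigr (fun i => c ^+ 2 * (y 0 i * y 0 i))); last first.
  by move=> i _; rewrite !mxE; ring.
by rewrite -mulr_sumr sqrtrM ?sqr_ge0 // sqrtr_sqr.
Qed.

Lemma norm2N y : norm2 (- y) = norm2 y.
Proof. by rewrite -scaleN1r norm2Z normrN normr1 mul1r. Qed.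

Lemma dist2C y w : dist2 y w = dist2 w y.
Proof. by rewrite /dist2 -opprB norm2N. Qed.

Lemma dotpBl y1 y2 w : dotp (y1 - y2) w = dotp y1 w - dotp y2 w.
Proof. by rewrite /dotp -sumrB; apply: eq_bigr => i _; rewrite !mxE mulrBl. Qed.

Lemma dotp_suml (I : finType) (P : pred I) (F : I -> 'rV[R]_d) w :
  dotp (\sum_(k | P k) F k) w = \sum_(k | P k) dotp (F k) w.
Proof.
rewrite /dotp exchange_big /=; apply: eq_bigr => i _.
by rewrite summxE mulr_suml.
Qed.

Lemma sqr_dotp_le y w : dotp y w ^+ 2 <= dotp y y * dotp w w.
Proof.
set A := dotp y y; set B := dotp w w; set C := dotp y w.
have [B0 | B_neq0] := eqVneq B 0.
  have w0 i : w 0 i = 0.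
    have /eqP : w 0 i * w 0 i = 0.
      by move/psumr_eq0P: B0 => -> // j _; rewrite -expr2 sqr_ge0.
    by rewrite mulf_eq0 orbb => /eqP.
  by rewrite /C /dotp big1 ?expr0n ?B0 ?mulr0 // => i _; rewrite w0 mulr0.
have B_gt0 : 0 < B by rewrite lt_def B_neq0 dotpp_ge0.
have := dotpp_ge0 (B *: y - C *: w).
have -> : dotp (B *: y - C *: w) (B *: y - C *: w) = B * (A * B - C ^+ 2).
  rewrite /dotp (eq_bigr (fun i => B ^+ 2 * (y 0 i * y 0 i)
      - (2 * B * C) * (y 0 i * w 0 i) + C ^+ 2 * (w 0 i * w 0 i))); last first.
    by move=> i _; rewrite !mxE; ring.
  rewrite big_split sumrB /= -!mulr_sumr.
  rewrite -[\sum_i y 0 i * y 0 i]/A -[\sum_i w 0 i * w 0 i]/B.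
  by rewrite -[\sum_i _ * w 0 i]/C; ring.
by rewrite pmulr_rge0 // subr_ge0.
Qed.

Lemma ler_norm_dotp y w : `|dotp y w| <= norm2 y * norm2 w.
Proof.
rewrite -sqrtr_sqr !norm2E -sqrtrM ?dotpp_ge0 // ler_sqrt ?mulr_ge0 ?dotpp_ge0 //.
exact: sqr_dotp_le.
Qed.

End Euclidean.

Section GraphLaplacian.
Variables (R : realDomainType) (V : finType) (r : rel V).
Hypothesis r_sym : symmetric r.
Implicit Type f : V -> R.

(* Analyst's sign convention: minus the Laplacian matrix applied to f. *)
Definition laplacian f v : R := \sum_(u | r u v) (f u - f v).

Lemma laplacianN f v : laplacian (fun u => - f u) v = - laplacian f v.
Proof.
by rewrite /laplacian -sumrN; apply: eq_bigr => u _; rewrite opprB opprK addrC.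
Qed.

Lemma sum_diff_within_eq0 (P : pred V) f :
  \sum_(v | P v) \sum_(u | r u v && P u) (f u - f v) = 0.
Proof.
set S := LHS.
have S_mkcond : S = \sum_v \sum_u (if P v && (r u v && P u) then f u - f v else 0).
  rewrite /S big_mkcond /=; apply: eq_bigr => v _.
  by case: (P v); rewrite /= ?big_mkcond // big1.
suff : S = - S by lra.
rewrite {1}S_mkcond exchange_big /= S_mkcond -sumrN; apply: eq_bigr => v _.
rewrite -sumrN; apply: eq_bigr => u _; rewrite (r_sym v u).
by case: (P u); case: (P v); case: (r u v); rewrite /= ?oppr0 ?opprB.
Qed.

Lemma sum_laplacian_sublevel_ge f (t : R) a b :
  f a <= t -> t < f b -> r b a ->
  f b - f a <= \sum_(v | f v <= t) laplacian f v.
Proof.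
move=> fa_le fb_gt rba.
rewrite /laplacian; under eq_bigr => v _ do rewrite (bigID (fun u => f u <= t)).
rewrite big_split /= sum_diff_within_eq0 add0r.
rewrite (bigD1 a) //= (bigD1 b) /=; last by rewrite rba -ltNge.
rewrite -addrA lerDl addr_ge0 //.
  apply: sumr_ge0 => u /andP[/andP[_ fu_gt] _].
  by rewrite subr_ge0 ltW // (le_lt_trans fa_le) // ltNge.
apply: sumr_ge0 => v /andP[fv_le _]; apply: sumr_ge0 => u /andP[_ fu_gt].
by rewrite subr_ge0 ltW // (le_lt_trans fv_le) // ltNge.
Qed.

Lemma sum_norm_laplacian_ge f a b :
  r a b -> f a <= f b -> 2 * (f b - f a) <= \sum_v `|laplacian f v|.
Proof.
move=> rab; rewrite le_eqVlt => /predU1P[-> | fab].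
  by rewrite subrr mulr0 sumr_ge0.
have below : f b - f a <= \sum_(v | f v <= f a) laplacian f v.
  by apply: sum_laplacian_sublevel_ge; rewrite // r_sym.
have above : f b - f a <= \sum_(v | f b <= f v) - laplacian f v.
  have := @sum_laplacian_sublevel_ge (fun u => - f u) (- f b) b a.
  rewrite opprK addrC ltrN2 => /(_ (lexx _) fab rab).
  by under eq_bigl do rewrite lerN2; under eq_bigr do rewrite laplacianN.
have := lerD below above; rewrite -mulr2n mulr_natl => /le_trans; apply.
rewrite [X in X + _]big_mkcond [X in _ + X]big_mkcond -big_split /=.
apply: ler_sum => v _; case: ifPn => fv_le; case: ifPn => fv_ge.
- by have := le_trans fv_ge fv_le; rewrite leNgt fab.
- by rewrite addr0 ler_norm.
- by rewrite add0r -normrN ler_norm.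
- by rewrite addr0.
Qed.

End GraphLaplacian.

Section HegselmannKrause.
Variables (R : rcfType) (d : nat) (V : finType) (e : rel V) (eps : R).
Variables (x : V -> 'rV[R]_d).
Hypothesis e_sym : symmetric e.

Local Notation N := (nbhd e eps x).
Local Notation influences := [rel u v | u \in N v].
Local Notation total_movement :=
  (\sum_(v : V) #|N v|%:R * norm2 (movement e eps x v)).

Lemma influences_sym : symmetric influences.
Proof. by move=> u v; rewrite /= !inE /infl_edge e_sym dist2C eq_sym. Qed.

Lemma card_nbhd_movement v :
  #|N v|%:R * norm2 (movement e eps x v) = norm2 (\sum_(u in N v) (x u - x v)).
Proof.
have N_neq0 : #|N v|%:R != 0 :> R.
  by rewrite pnatr_eq0 -lt0n card_gt0; apply/set0Pn; exists v; rewrite inE eqxx orbT.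
by rewrite norm2Z ger0_norm ?invr_ge0 ?ler0n // mulrA mulfV ?mul1r.
Qed.

Lemma dotp_sum_diff w v :
  dotp (\sum_(u in N v) (x u - x v)) w =
  laplacian influences (fun u => dotp (x u) w) v.
Proof. by rewrite dotp_suml; apply: eq_bigr => u _; rewrite dotpBl. Qed.

Lemma total_movement_ge_infl_edge a b :
  infl_edge e eps x a b -> 2 * dist2 (x a) (x b) <= total_movement.
Proof.
move=> ab; set lam := dist2 (x a) (x b).
have [-> | lam_neq0] := eqVneq lam 0.
  by rewrite mulr0 sumr_ge0 // => v _; rewrite mulr_ge0 ?norm2_ge0.
have lam_gt0 : 0 < lam by rewrite lt_def lam_neq0 norm2_ge0.
set w := x b - x a; set f := fun v => dotp (x v) w.
have norm_w : norm2 w = lam by rewrite /lam dist2C.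
have f_ba : f b - f a = lam ^+ 2 by rewrite /f -dotpBl -norm_w sqr_norm2.
have : 2 * lam ^+ 2 <= lam * total_movement.
  rewrite -f_ba; apply: le_trans (sum_norm_laplacian_ge influences_sym _ _) _.
  - by rewrite /= inE ab.
  - by rewrite -subr_ge0 f_ba sqr_ge0.
  rewrite mulr_sumr; apply: ler_sum => v _.
  by rewrite card_nbhd_movement -dotp_sum_diff mulrC -norm_w ler_norm_dotp.
by rewrite expr2 mulrCA ler_pM2l.
Qed.

End HegselmannKrause.

Theorem corollary1 (R : rcfType) (d : nat) (V : finType) (e : rel V)
  (e_sym : symmetric e) (e_irr : irreflexive e)
  (eps : R) (eps_gt0 : 0 < eps) (x : V -> 'rV[R]_d) :
  2 * longest_infl_edge e eps x <=
  \sum_(v : V) #|nbhd e eps x v|%:R * norm2 (movement e eps x v).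
Proof.
rewrite /longest_infl_edge.
elim/big_ind: _ => [||[a b] ab].
- by rewrite mulr0 sumr_ge0 // => v _; rewrite mulr_ge0 ?norm2_ge0.
- by move=> l1 l2 le1 le2; rewrite maxr_pMr // ge_max le1 le2.
- exact: total_movement_ge_infl_edge.
Qed.
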